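(* For every $i\in\{1,\dots,n\}$, the control input $v_i(\mathbf p)=\mathrm{sat}(v_i^{\mathrm{ms}}(\mathbf p)+v_i^{\mathrm{cv}}(\mathbf p))$ is locally Lipschitz with respect to $\mathbf p$ on $\mathbb{R}^{dn}$.
   Context: Setting: $n\ge2$ robots in $\mathbb{R}^d$, positions $p_i\in\mathbb{R}^d$, configuration $\mathbf p=[p_1^\top,\dots,p_n^\top]^\top\in\mathbb{R}^{dn}$; fixed sample points $q_1,\dots,q_m\in\mathbb{R}^d$; constants $\beta>0$, $\sigma_1>0$, $\sigma_2>0$, $\varepsilon\in(0,1)$, $r_{\mathrm{avoid}}>0$, $v_{\max}>0$. Mass: $P_k(\mathbf p)=\frac1n\sum_{i=1}^n e^{-\beta\|q_k-p_i\|^2}$. Meanshift command: $v_i^{\mathrm{ms}}(\mathbf p)=\dfrac{\frac{\sigma_1}{m}\sum_{k=1}^m P_k(\mathbf p)^{-1}e^{-\beta\|q_k-p_i\|^2}(q_k-p_i)}{\sum_{k=1}^m P_k(\mathbf p)^{-1}e^{-\beta\|q_k-p_i\|^2}}$. Repulsive term: $\tilde v_i^{\mathrm{cv}}=\sigma_2\sum_{j\ne i,\ \|p_i-p_j\|\le r_{\mathrm{avoid}}}\frac{r_{\mathrm{avoid}}-\|p_i-p_j\|}{\|p_i-p_j\|+\varepsilon}(p_i-p_j)$. With $\varphi=\min\{\|v_i^{\mathrm{ms}}\|^2/\varepsilon,1\}$, the gain is $\kappa_2=\varphi$ if $(v_i^{\mathrm{ms}})^\top\tilde v_i^{\mathrm{cv}}\ge0$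 and $\kappa_2=\varphi\min\{-(1-\varepsilon)\|v_i^{\mathrm{ms}}\|^2/((v_i^{\mathrm{ms}})^\top\tilde v_i^{\mathrm{cv}}),1\}$ if $(v_i^{\mathrm{ms}})^\top\tilde v_i^{\mathrm{cv}}<0$; collision-avoidance command $v_i^{\mathrm{cv}}=\kappa_2\tilde v_i^{\mathrm{cv}}$. Saturation: $\mathrm{sat}(z)=v_{\max}z/\|z\|$ if $\|z\|>v_{\max}$, and $\mathrm{sat}(z)=z$ otherwise. *)

From HB Require Import structures.
From mathcomp Require Import all_boot all_order all_algebra.
From mathcomp Require Import reals.
From mathcomp Require Import sequences exp.
Set Implicit Arguments. Unset Strict Implicit. Unset Printing Implicit Defensive.
Import Order.TTheory GRing.Theory Num.Theory.
Local Open Scope ring_scope.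

Section Defs.
Variables (R : realType) (d n m : nat).

(* vectors of R^d are row vectors 'rV[R]_d; configurations p = (p_1,...,p_n)
   are functions 'I_n -> 'rV[R]_d (an element of R^{dn}) *)
Definition vec := 'rV[R]_d.
Definition config := 'I_n -> vec.

Definition dotv (u v : vec) : R := \sum_(k < d) u 0 k * v 0 k.
Definition enorm (u : vec) : R := Num.sqrt (dotv u u).

Definition cdist (p q : config) : R :=
  Num.sqrt (\sum_(i < n) enorm (p i - q i) ^+ 2).

Definition mass (beta : R) (q : 'I_m -> vec) (p : config) (k : 'I_m) : R :=
  n%:R^-1 * \sum_(i < n) expR (- beta * enorm (q k - p i) ^+ 2).

Definition v_ms (beta sigma1 : R) (q : 'I_m -> vec) (p : config) (i : 'I_n)
  : vec :=
  ((sigma1 / m%:R) *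
     (\sum_(k < m) (mass beta q p k)^-1 * expR (- beta * enorm (q k - p i) ^+ 2))^-1)
  *: \sum_(k < m) ((mass beta q p k)^-1 * expR (- beta * enorm (q k - p i) ^+ 2))
                   *: (q k - p i).

Definition v_rep (sigma2 eps ravoid : R) (p : config) (i : 'I_n) : vec :=
  sigma2 *: \sum_(j < n | (j != i) && (enorm (p i - p j) <= ravoid))
     ((ravoid - enorm (p i - p j)) / (enorm (p i - p j) + eps)) *: (p i - p j).

Definition kappa2 (eps : R) (vms vt : vec) : R :=
  let phi := Num.min (enorm vms ^+ 2 / eps) 1 in
  if 0 <= dotv vms vt then phi
  else phi * Num.min (- (1 - eps) * enorm vms ^+ 2 / dotv vms vt) 1.

Definition v_cv (beta sigma1 sigma2 eps ravoid : R) (q : 'I_m -> vec)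
  (p : config) (i : 'I_n) : vec :=
  kappa2 eps (v_ms beta sigma1 q p i) (v_rep sigma2 eps ravoid p i)
  *: v_rep sigma2 eps ravoid p i.

Definition sat (vmax : R) (z : vec) : vec :=
  if vmax < enorm z then (vmax / enorm z) *: z else z.

Definition control (beta sigma1 sigma2 eps ravoid vmax : R) (q : 'I_m -> vec)
  (p : config) (i : 'I_n) : vec :=
  sat vmax (v_ms beta sigma1 q p i + v_cv beta sigma1 sigma2 eps ravoid q p i).

Definition locally_lipschitz (f : config -> vec) : Prop :=
  forall p0 : config, exists r : R, exists L : R, 0 < r /\
    forall p p' : config, cdist p0 p < r -> cdist p0 p' < r ->
      enorm (f p - f p') <= L * cdist p p'.

End Defs.

(* Each ingredient of the control law is built from the coordinates of p by operations
   that preserve local Lipschitz continuity: sums, products, exp, max/min, the Euclidean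
   norm, and inverses away from 0.  Three rewritings bring the law into this form:
   - the repulsive term only sees the clipped coefficient max (ravoid - |p_i - p_j|) 0,
     which is continuous across the cutoff;
   - sat z = vmax / max vmax |z| * z;
   - kappa2 = min (A / eps) 1 * (c A / max (c A) (- v.w)), with A = |v|^2, c = 1 - eps.
   The last quotient is fine away from v = 0; near v = 0 the gain equals
   (c / eps) A^2 / max (c A) (- v.w), which is Lipschitz because A / max (c A) (- v.w)
   stays in [0, 1/c]. *)

From Pilot Require Import Defs.
From HB Require Import structures.
From mathcomp Require Import all_boot all_order all_algebra.
From mathcomp Require Import reals.
From mathcomp Require Import sequences exp.
From mathcomp Require Import ring lra.
Import Order.TTheory GRing.Theory Num.Theory.
Local Open Scope ring_scope.
Set Implicit Arguments. Unset Strict Implicit. Unset Printing Implicit Defensive.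

Section EuclideanNorm.
Variables (R : realType) (d : nat).
Implicit Types u v : 'rV[R]_d.

Lemma dotvC u v : dotv u v = dotv v u.
Proof. by apply: eq_bigr => k _; rewrite mulrC. Qed.

Lemma dotvv_ge0 u : 0 <= dotv u u.
Proof. by apply: sumr_ge0 => k _; rewrite -expr2 sqr_ge0. Qed.

Lemma enorm_ge0 u : 0 <= enorm u.
Proof. exact: sqrtr_ge0. Qed.

Lemma sqr_enorm u : enorm u ^+ 2 = dotv u u.
Proof. by rewrite sqr_sqrtr // dotvv_ge0. Qed.

Lemma enormN u : enorm (- u) = enorm u.
Proof.
by rewrite /enorm /dotv; congr Num.sqrt; apply: eq_bigr => k _; rewrite !mxE mulrNN.
Qed.

Lemma enorm_distC u v : enorm (u - v) = enorm (v - u).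
Proof. by rewrite -enormN opprB. Qed.

Lemma ler_coord_enorm u k : `|u 0 k| <= enorm u.
Proof.
rewrite -sqrtr_sqr; apply: ler_wsqrtr.
rewrite /dotv (bigD1 k) //= expr2 lerDl.
by apply: sumr_ge0 => j _; rewrite -expr2 sqr_ge0.
Qed.

Lemma enorm_eq0_dotv u v : enorm u = 0 -> dotv u v = 0.
Proof.
move=> u0; rewrite /dotv big1 // => k _.
by have := ler_coord_enorm u k; rewrite u0 normr_le0 => /eqP->; rewrite mul0r.
Qed.

Lemma dotv_le_enorm u v : dotv u v <= enorm u * enorm v.
Proof.
have [u0|nu] := eqVneq (enorm u) 0; first by rewrite enorm_eq0_dotv // u0 mul0r.
have [v0|nv] := eqVneq (enorm v) 0.
  by rewrite dotvC enorm_eq0_dotv // v0 mulr0.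
set a := enorm u; set b := enorm v.
have ab0 : 0 < 2 * (a * b).
  by rewrite !mulr_gt0 // lt_neqAle eq_sym ?nu ?nv enorm_ge0.
have : 0 <= \sum_k (b * u 0 k - a * v 0 k) ^+ 2.
  by apply: sumr_ge0 => k _; rewrite sqr_ge0.
have -> : \sum_k (b * u 0 k - a * v 0 k) ^+ 2 = 2 * (a * b) * (a * b - dotv u v).
  transitivity (b ^+ 2 * dotv u u - 2 * (a * b) * dotv u v + a ^+ 2 * dotv v v).
    by rewrite /dotv !mulr_sumr -!sumrB -big_split /=; apply: eq_bigr => k _; ring.
  by rewrite -!sqr_enorm -/a -/b; ring.
by rewrite pmulr_rge0 // subr_ge0.
Qed.

Lemma ler_enormD u v : enorm (u + v) <= enorm u + enorm v.
Proof.
have uv0 : 0 <= enorm u + enorm v by rewrite addr_ge0 // enorm_ge0.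
rewrite -(ger0_norm uv0) -sqrtr_sqr; apply: ler_wsqrtr.
have -> : dotv (u + v) (u + v) = dotv u u + 2 * dotv u v + dotv v v.
  rewrite /dotv mulr_sumr -!big_split /=; apply: eq_bigr => k _; rewrite !mxE; ring.
rewrite sqrrD !sqr_enorm; have := dotv_le_enorm u v; lra.
Qed.

Lemma ler_enorm_dist u v : `|enorm u - enorm v| <= enorm (u - v).
Proof.
rewrite ler_norml; apply/andP; split.
- have := ler_enormD (v - u) u; rewrite subrK enorm_distC; lra.
- have := ler_enormD (u - v) v; rewrite subrK; lra.
Qed.

Lemma sum_sqr_le_sqr_sum (I : Type) (s : seq I) (f : I -> R) :
  (forall i, 0 <= f i) -> \sum_(i <- s) f i ^+ 2 <= (\sum_(i <- s) f i) ^+ 2.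
Proof.
move=> f_ge0; elim: s => [|a s IH]; first by rewrite !big_nil expr0n.
rewrite !big_cons.
have := f_ge0 a; have : 0 <= \sum_(i <- s) f i by apply: sumr_ge0.
nra.
Qed.

Lemma enorm_le_sum u : enorm u <= \sum_k `|u 0 k|.
Proof.
have s0 : 0 <= \sum_k `|u 0 k| by apply: sumr_ge0.
rewrite -(ger0_norm s0) -sqrtr_sqr; apply: ler_wsqrtr.
apply: le_trans (sum_sqr_le_sqr_sum _ (fun k => normr_ge0 (u 0 k))).
by apply: ler_sum => k _; rewrite real_normK ?num_real // expr2.
Qed.

End EuclideanNorm.

Lemma ler_maxr_dist (R : realDomainType) (a b a' b' : R) :
  `|Num.max a b - Num.max a' b'| <= `|a - a'| + `|b - b'|.
Proof.
have := ler_norm (a - a'); have := ler_norm (a' - a).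
have := ler_norm (b - b'); have := ler_norm (b' - b).
rewrite (distrC a') (distrC b').
by case: (leP a b); case: (leP a' b') => *; rewrite ler_norml; apply/andP; split; lra.
Qed.

Lemma expR_dist_le (R : realType) (B x y : R) : `|x| <= B -> `|y| <= B ->
  `|expR x - expR y| <= expR B * `|x - y|.
Proof.
wlog xy : x y / x <= y.
  move=> W hx hy; have [/W|/ltW/W] := leP x y; first exact.
  by rewrite distrC (distrC x); apply.
move=> _ /ler_normlP[_ yB].
have : expR y - expR x <= expR y * (y - x).
  have := expR_ge1Dx (x - y).
  have -> : expR x = expR y * expR (x - y) by rewrite -expRD addrC subrK.
  have := expR_gt0 y; nra.
rewrite distrC (distrC x) !ger0_norm ?subr_ge0 ?ler_expR //.
have : expR y <= expR B by rewrite ler_expR.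
have : 0 <= y - x by rewrite subr_ge0.
nra.
Qed.

Lemma div_ge0_le_invr (R : realFieldType) (c A M : R) :
  0 < c -> 0 <= A -> c * A <= M -> 0 <= A / M <= c^-1.
Proof.
move=> c0 A0 cAM; have [M0|M0] := lerP M 0.
  have -> : A = 0 by nra.
  by rewrite mul0r lexx invr_ge0 ltW.
apply/andP; split; first by rewrite divr_ge0 // ltW.
by rewrite ler_pdivrMr // mulrC ler_pdivlMr // mulrC.
Qed.

(* Valid also when [M] or [M'] vanishes: then [A] resp. [A'] is [0] and [x / 0 = 0]. *)
Lemma sqr_div_diff_split (R : realFieldType) (c A M A' M' : R) : 0 < c ->
  0 <= A -> c * A <= M -> 0 <= A' -> c * A' <= M' ->
  A * A / M - A' * A' / M' =
    (A / M + A' / M') * (A - A') + (A / M) * (A' / M') * (M' - M).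
Proof.
move=> c0 A0 cAM A'0 cAM'.
have [M0|M0] := lerP M 0; have [M'0|M'0] := lerP M' 0.
- have -> : A = 0 by nra. have -> : A' = 0 by nra. ring.
- have -> : A = 0 by nra. ring.
- have -> : A' = 0 by nra. ring.
- by field; rewrite !gt_eqF.
Qed.

Section ConfigDistance.
Variables (R : realType) (d n : nat).
Local Notation cdist := (@cdist R d n).
Implicit Types p q : config R d n.

Lemma cdist_ge0 p q : 0 <= cdist p q.
Proof. exact: sqrtr_ge0. Qed.

Lemma cdistC p q : cdist p q = cdist q p.
Proof. by congr Num.sqrt; apply: eq_bigr => i _; rewrite enorm_distC. Qed.

Lemma cdistxx p : cdist p p = 0.
Proof.
rewrite /Defs.cdist big1 ?sqrtr0 // => i _.
by rewrite subrr /enorm /dotv big1 ?sqrtr0 ?expr0n // => k _; rewrite mxE mul0r.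
Qed.

Lemma enorm_le_cdist p q j : enorm (p j - q j) <= cdist p q.
Proof.
rewrite -(ger0_norm (enorm_ge0 _)) -sqrtr_sqr; apply: ler_wsqrtr.
rewrite (bigD1 j) //= lerDl.
by apply: sumr_ge0 => i _; rewrite sqr_ge0.
Qed.

End ConfigDistance.

Section LipschitzNear.
Variables (R : realType) (d n : nat).
Local Notation cfg := (config R d n).
Local Notation cdist := (@cdist R d n).
Variable p0 : cfg.
Implicit Types f g : cfg -> R.

Definition lipschitz_near f := exists r L, 0 < r /\ 0 <= L /\
  forall p p', cdist p0 p < r -> cdist p0 p' < r -> `|f p - f p'| <= L * cdist p p'.

Lemma lipschitz_near_bounded f : lipschitz_near f ->
  exists r B, 0 < r /\ forall p, cdist p0 p < r -> `|f p| <= B.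
Proof.
case=> r [L [r0 [L0 fL]]]; exists r, (`|f p0| + L * r); split => // p p0p.
have := fL p p0 p0p; rewrite cdistxx cdistC => /(_ r0) fpp0.
have : L * cdist p0 p <= L * r by rewrite ler_wpM2l // ltW.
have := ler_normD (f p - f p0) (f p0); rewrite subrK; lra.
Qed.

Lemma lipschitz_near_continuous f : lipschitz_near f -> forall e, 0 < e ->
  exists r, 0 < r /\ forall p, cdist p0 p < r -> `|f p - f p0| < e.
Proof.
case=> r [L [r0 [L0 fL]]] e e0.
exists (Num.min r (e / (L + 1))); split; first by rewrite lt_min r0 divr_gt0 //; lra.
move=> p; rewrite lt_min => /andP[p0p]; rewrite ltr_pdivlMr; last lra.
have := fL p p0 p0p; rewrite cdistxx cdistC => /(_ r0).
have := cdist_ge0 p0 p; nra.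
Qed.

Lemma lipschitz_near_eq f g : lipschitz_near g ->
  (exists r, 0 < r /\ forall p, cdist p0 p < r -> f p = g p) -> lipschitz_near f.
Proof.
case=> r [L [r0 [L0 gL]]] [r' [r'0 fg]].
exists (Num.min r r'), L; split; first by rewrite lt_min r0.
split => // p p'; rewrite !lt_min => /andP[p0p /fg->] /andP[p0p' /fg->].
exact: gL.
Qed.

Lemma lipschitz_near_ext f g : lipschitz_near g -> f =1 g -> lipschitz_near f.
Proof. by move=> gL fg; apply: (lipschitz_near_eq gL); exists 1. Qed.

Lemma lipschitz_near_cst c : lipschitz_near (fun=> c).
Proof. by exists 1, 0; do 2!split => //; move=> p p' _ _; rewrite subrr normr0 mul0r. Qed.

Lemma lipschitz_near_coord j k : lipschitz_near (fun p => p j 0 k).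
Proof.
exists 1, 1; do 2!split => //; move=> p p' _ _; rewrite mul1r.
have := ler_coord_enorm (p j - p' j) k; rewrite !mxE => /le_trans; apply.
exact: enorm_le_cdist.
Qed.

Lemma lipschitz_nearD f g : lipschitz_near f -> lipschitz_near g ->
  lipschitz_near (fun p => f p + g p).
Proof.
case=> r [L [r0 [L0 fL]]] [r' [L' [r'0 [L'0 gL]]]].
exists (Num.min r r'), (L + L'); split; first by rewrite lt_min r0.
split; first by rewrite addr_ge0.
move=> p p'; rewrite !lt_min => /andP[h1 h2] /andP[h3 h4].
rewrite opprD addrACA; apply: le_trans (ler_normD _ _) _.
have := fL p p' h1 h3; have := gL p p' h2 h4; lra.
Qed.

Lemma lipschitz_nearN f : lipschitz_near f -> lipschitz_near (fun p => - f p).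
Proof.
case=> r [L [r0 [L0 fL]]]; exists r, L; do 2!split => //.
by move=> p p' h h'; rewrite -opprD normrN; apply: fL.
Qed.

Lemma lipschitz_nearB f g : lipschitz_near f -> lipschitz_near g ->
  lipschitz_near (fun p => f p - g p).
Proof. by move=> fL /lipschitz_nearN; apply: lipschitz_nearD. Qed.

Lemma lipschitz_nearM f g : lipschitz_near f -> lipschitz_near g ->
  lipschitz_near (fun p => f p * g p).
Proof.
move=> fL gL.
have [rf [B [rf0 fB]]] := lipschitz_near_bounded fL.
have [rg [B' [rg0 gB]]] := lipschitz_near_bounded gL.
case: fL => r [L [r0 [L0 fL]]]; case: gL => r' [L' [r'0 [L'0 gL]]].
exists (Num.min (Num.min r r') (Num.min rf rg)), (`|B| * L' + `|B'| * L).
split; first by rewrite !lt_min r0 r'0 rf0 rg0.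
split; first by rewrite addr_ge0 // mulr_ge0.
move=> p p'; rewrite !lt_min.
move=> /andP[/andP[h1 h2] /andP[h3 _]] /andP[/andP[h4 h5] /andP[_ h6]].
have -> : f p * g p - f p' * g p' = f p * (g p - g p') + g p' * (f p - f p') by ring.
apply: le_trans (ler_normD _ _) _; rewrite !normrM.
have := fL p p' h1 h4; have := gL p p' h2 h5.
have := le_trans (fB p h3) (ler_norm B); have := le_trans (gB p' h6) (ler_norm B').
have := normr_ge0 (f p); have := normr_ge0 (g p');
have := normr_ge0 (f p - f p'); have := normr_ge0 (g p - g p'); have := cdist_ge0 p p'.
nra.
Qed.

Lemma lipschitz_nearV f : lipschitz_near f -> f p0 != 0 ->
  lipschitz_near (fun p => (f p)^-1).
Proof.
move=> fL fp0; set a := `|f p0|.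
have a0 : 0 < a by rewrite normr_gt0.
have [rn [rn0 near_fp0]] := lipschitz_near_continuous fL (divr_gt0 a0 (ltr0Sn _ 1)).
case: fL => r [L [r0 [L0 fL]]].
exists (Num.min r rn), (4 * L / a ^+ 2); split; first by rewrite lt_min r0.
split; first by rewrite !mulr_ge0 // invr_ge0 exprn_ge0 // ltW.
move=> p p'; rewrite !lt_min => /andP[h1 h2] /andP[h3 h4].
have f_lb x : cdist p0 x < rn -> a / 2 <= `|f x|.
  move/near_fp0; have := ler_normD (f p0 - f x) (f x).
  by rewrite subrK distrC -/a; lra.
have := f_lb p h2; have := f_lb p' h4 => lb' lb.
have fp : f p != 0 by rewrite -normr_gt0; lra.
have fp' : f p' != 0 by rewrite -normr_gt0; lra.
have -> : (f p)^-1 - (f p')^-1 = (f p' - f p) / (f p * f p') by field; apply/andP.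
rewrite normrM normrV ?unitfE ?mulf_neq0 // normrM distrC.
rewrite ler_pdivrMr ?mulr_gt0 ?normr_gt0 //.
have prod_lb : a ^+ 2 / 4 <= `|f p| * `|f p'|.
  have := normr_ge0 (f p); have := normr_ge0 (f p'); nra.
have := fL p p' h1 h3; have := cdist_ge0 p p'.
have : 0 <= L * cdist p p' by rewrite mulr_ge0 // cdist_ge0.
have -> : 4 * L / a ^+ 2 * cdist p p' * (`|f p| * `|f p'|)
          = L * cdist p p' * (4 * (`|f p| * `|f p'|) / a ^+ 2).
  by field; rewrite gt_eqF.
have : 1 <= 4 * (`|f p| * `|f p'|) / a ^+ 2.
  by rewrite ler_pdivlMr ?exprn_gt0 //; lra.
nra.
Qed.

Lemma lipschitz_near_sum (I : Type) (s : seq I) (P : pred I) (F : I -> cfg -> R) :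
  (forall i, P i -> lipschitz_near (F i)) ->
  lipschitz_near (fun p => \sum_(i <- s | P i) F i p).
Proof.
move=> FL; elim: s => [|a s IH].
  by apply: (lipschitz_near_ext (lipschitz_near_cst 0)) => p; rewrite big_nil.
case Pa: (P a).
  by apply: (lipschitz_near_ext (lipschitz_nearD (FL a Pa) IH)) => p; rewrite big_cons Pa.
by apply: (lipschitz_near_ext IH) => p; rewrite big_cons Pa.
Qed.

Lemma lipschitz_near_expR f : lipschitz_near f -> lipschitz_near (fun p => expR (f p)).
Proof.
move=> fL; have [rb [B [rb0 fB]]] := lipschitz_near_bounded fL.
case: fL => r [L [r0 [L0 fL]]].
exists (Num.min r rb), (expR B * L); split; first by rewrite lt_min r0.
split; first by rewrite mulr_ge0 // expR_ge0.
move=> p p'; rewrite !lt_min => /andP[h1 h2] /andP[h3 h4].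
apply: le_trans (expR_dist_le (fB p h2) (fB p' h4)) _.
by rewrite -mulrA ler_wpM2l ?expR_ge0 // fL.
Qed.

Lemma lipschitz_near_max f g : lipschitz_near f -> lipschitz_near g ->
  lipschitz_near (fun p => Num.max (f p) (g p)).
Proof.
case=> r [L [r0 [L0 fL]]] [r' [L' [r'0 [L'0 gL]]]].
exists (Num.min r r'), (L + L'); split; first by rewrite lt_min r0.
split; first by rewrite addr_ge0.
move=> p p'; rewrite !lt_min => /andP[h1 h2] /andP[h3 h4].
apply: le_trans (ler_maxr_dist _ _ _ _) _.
have := fL p p' h1 h3; have := gL p p' h2 h4; lra.
Qed.

Lemma lipschitz_near_min f g : lipschitz_near f -> lipschitz_near g ->
  lipschitz_near (fun p => Num.min (f p) (g p)).
Proof.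
move=> fL gL; apply: (lipschitz_near_ext (lipschitz_nearN
  (lipschitz_near_max (lipschitz_nearN fL) (lipschitz_nearN gL)))) => p.
by rewrite -oppr_min !opprK.
Qed.

(* [A^2 / M] stays Lipschitz even where [M] vanishes, since [0 <= A / M <= 1/c]. *)
Lemma lipschitz_near_sqr_div (c : R) (A M : cfg -> R) : 0 < c ->
  (forall p, 0 <= A p) -> (forall p, c * A p <= M p) ->
  lipschitz_near A -> lipschitz_near M -> lipschitz_near (fun p => A p * A p / M p).
Proof.
move=> c0 A0 AM [r [L [r0 [L0 AL]]]] [r' [L' [r'0 [L'0 ML]]]].
set ci := c^-1; have ci0 : 0 <= ci by rewrite invr_ge0 ltW.
exists (Num.min r r'), (2 * ci * L + ci * ci * L'); split; first by rewrite lt_min r0.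
split; first by rewrite addr_ge0 // !mulr_ge0.
move=> p p'; rewrite !lt_min => /andP[h1 h2] /andP[h3 h4].
rewrite (sqr_div_diff_split c0 (A0 p) (AM p) (A0 p') (AM p')).
have /andP[x0 x1] := div_ge0_le_invr c0 (A0 p) (AM p).
have /andP[y0 y1] := div_ge0_le_invr c0 (A0 p') (AM p').
move: (A p / M p) (A p' / M p') x0 x1 y0 y1 => x y x0 x1 y0 y1.
rewrite -/ci in x1 y1; apply: le_trans (ler_normD _ _) _.
rewrite normrM (ger0_norm (addr_ge0 x0 y0)) normrM (ger0_norm (mulr_ge0 x0 y0)).
have ALp := AL p p' h1 h3; have MLp := ML p p' h2 h4; rewrite distrC in MLp.
have e1 : (x + y) * `|A p - A p'| <= (2 * ci) * (L * cdist p p').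
  by apply: ler_pM; rewrite ?addr_ge0 //; lra.
have e2 : x * y * `|M p' - M p| <= ci * ci * (L' * cdist p p').
  by apply: ler_pM; rewrite ?mulr_ge0 ?normr_ge0 //; apply: ler_pM.
lra.
Qed.

End LipschitzNear.

Section LipschitzNearVector.
Variables (R : realType) (d n : nat) (p0 : config R d n).
Local Notation cfg := (config R d n).
Local Notation cdist := (@cdist R d n).
Implicit Types f g : cfg -> 'rV[R]_d.

Definition lipschitzv_near f := forall k : 'I_d, lipschitz_near p0 (fun p => f p 0 k).

Lemma lipschitzv_near_ext f g : lipschitzv_near g -> f =1 g -> lipschitzv_near f.
Proof. by move=> gL fg k; apply: (lipschitz_near_ext (gL k)) => p; rewrite fg. Qed.

Lemma lipschitz_near_uniform (I : eqType) (s : seq I) (F : I -> cfg -> R) :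
  (forall i, lipschitz_near p0 (F i)) -> exists r L, 0 < r /\ 0 <= L /\
    forall i p p', i \in s -> cdist p0 p < r -> cdist p0 p' < r ->
      `|F i p - F i p'| <= L * cdist p p'.
Proof.
move=> FL; elim: s => [|a s [r [L [r0 [L0 sL]]]]]; first by exists 1, 0.
have [ra [La [ra0 [La0 aL]]]] := FL a.
exists (Num.min r ra), (L + La); split; first by rewrite lt_min r0.
split; first by rewrite addr_ge0.
move=> i p p'; rewrite inE !lt_min => /orP[/eqP-> | si] /andP[h1 h2] /andP[h3 h4].
- have := aL p p' h2 h4; have := cdist_ge0 p p'; nra.
- have := sL i p p' si h1 h3; have := cdist_ge0 p p'; nra.
Qed.

Lemma lipschitzv_near_enorm f : lipschitzv_near f -> exists r L, 0 < r /\ 0 <= L /\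
  forall p p', cdist p0 p < r -> cdist p0 p' < r ->
    enorm (f p - f p') <= L * cdist p p'.
Proof.
move=> fL; have [r [L [r0 [L0 kL]]]] := lipschitz_near_uniform (index_enum 'I_d) fL.
exists r, (d%:R * L); do 2!split => //; first by rewrite mulr_ge0.
move=> p p' h h'; apply: le_trans (enorm_le_sum _) _.
have coordL (k : 'I_d) : `|(f p - f p') 0 k| <= L * cdist p p'.
  by rewrite !mxE kL ?mem_index_enum.
apply: le_trans (ler_sum _ (fun k _ => coordL k)) _.
by rewrite sumr_const card_ord -(mulr_natl (L * cdist p p')) mulrA.
Qed.

Lemma lipschitz_near_enorm f :
  lipschitzv_near f -> lipschitz_near p0 (fun p => enorm (f p)).
Proof.
case/lipschitzv_near_enorm => r [L [r0 [L0 fL]]]; exists r, L; do 2!split => //.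
by move=> p p' h h'; apply: le_trans (ler_enorm_dist _ _) (fL _ _ h h').
Qed.

Lemma lipschitzv_near_cst c : lipschitzv_near (fun=> c).
Proof. by move=> k; apply: lipschitz_near_cst. Qed.

Lemma lipschitzv_near_point j : lipschitzv_near (fun p => p j).
Proof. by move=> k; apply: lipschitz_near_coord. Qed.

Lemma lipschitzv_nearD f g : lipschitzv_near f -> lipschitzv_near g ->
  lipschitzv_near (fun p => f p + g p).
Proof.
move=> fL gL k; apply: (lipschitz_near_ext (lipschitz_nearD (fL k) (gL k))) => p.
by rewrite mxE.
Qed.

Lemma lipschitzv_nearB f g : lipschitzv_near f -> lipschitzv_near g ->
  lipschitzv_near (fun p => f p - g p).
Proof.
move=> fL gL k; apply: (lipschitz_near_ext (lipschitz_nearB (fL k) (gL k))) => p.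
by rewrite !mxE.
Qed.

Lemma lipschitzv_nearZ (s : cfg -> R) f : lipschitz_near p0 s -> lipschitzv_near f ->
  lipschitzv_near (fun p => s p *: f p).
Proof.
move=> sL fL k; apply: (lipschitz_near_ext (lipschitz_nearM sL (fL k))) => p.
by rewrite !mxE.
Qed.

Lemma lipschitzv_near_sum (I : Type) (s : seq I) (P : pred I) (F : I -> cfg -> 'rV[R]_d) :
  (forall i, P i -> lipschitzv_near (F i)) ->
  lipschitzv_near (fun p => \sum_(i <- s | P i) F i p).
Proof.
move=> FL k; apply: (lipschitz_near_ext (lipschitz_near_sum s (fun i Pi => FL i Pi k))).
by move=> p; rewrite summxE.
Qed.

Lemma lipschitz_near_dotv f g : lipschitzv_near f -> lipschitzv_near g ->
  lipschitz_near p0 (fun p => dotv (f p) (g p)).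
Proof.
by move=> fL gL; apply: lipschitz_near_sum => k _; apply: lipschitz_nearM.
Qed.

End LipschitzNearVector.

Section ControlTerms.
Variables (R : realType) (d n : nat).
Local Notation cfg := (config R d n).
Implicit Types (a b z : 'rV[R]_d).

Lemma kappa2_maxE (eps : R) a b : 0 < eps -> eps < 1 ->
  kappa2 eps a b = Num.min (dotv a a / eps) 1 *
    ((1 - eps) * dotv a a / Num.max ((1 - eps) * dotv a a) (- dotv a b)).
Proof.
move=> eps0 eps1; rewrite /kappa2 /= sqr_enorm.
set A := dotv a a; set D := dotv a b.
have A0 : 0 <= A := dotvv_ge0 a.
have c0 : 0 < 1 - eps by lra.
case: ifP => [D0|/negbT]; last rewrite -ltNge => D0.
  have [A_le0|A_gt0] := lerP A 0.
    have -> : A = 0 by lra.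
    by rewrite !mul0r min_l // mul0r.
  have cA : 0 < (1 - eps) * A by rewrite mulr_gt0.
  by rewrite max_l ?divff ?mulr1 ?gt_eqF //; lra.
have -> : - (1 - eps) * A / D = (1 - eps) * A / - D by rewrite invrN mulrN !mulNr.
congr (_ * _); have [Dc|Dc] := leP (- D) ((1 - eps) * A).
  have cA : 0 < (1 - eps) * A by lra.
  by rewrite divff ?gt_eqF // min_r // ler_pdivlMr; lra.
by rewrite min_l // ler_pdivrMr; lra.
Qed.

Lemma satE (vmax : R) z : 0 < vmax -> sat vmax z = (vmax / Num.max vmax (enorm z)) *: z.
Proof.
move=> vmax0; rewrite /sat; case: ifP => [/ltW/max_r->//|/negbT].
by rewrite -leNgt => /max_l->; rewrite divff ?scale1r // gt_eqF.
Qed.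

Variable p0 : cfg.

Lemma lipschitzv_near_sat (vmax : R) (z : cfg -> 'rV[R]_d) : 0 < vmax ->
  lipschitzv_near p0 z -> lipschitzv_near p0 (fun p => sat vmax (z p)).
Proof.
move=> vmax0 zL; apply: lipschitzv_near_ext (fun p => satE (z p) vmax0).
apply: (lipschitzv_nearZ _ zL); apply: lipschitz_nearM; first exact: lipschitz_near_cst.
apply: lipschitz_nearV; last by rewrite /= gt_eqF // lt_max vmax0.
exact: lipschitz_near_max (lipschitz_near_cst p0 vmax) (lipschitz_near_enorm zL).
Qed.

Lemma lipschitzv_near_kappa2Z (eps : R) (a b : cfg -> 'rV[R]_d) : 0 < eps -> eps < 1 ->
  lipschitzv_near p0 a -> lipschitzv_near p0 b ->
  lipschitzv_near p0 (fun p => kappa2 eps (a p) (b p) *: b p).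
Proof.
move=> eps0 eps1 aL bL.
pose c := 1 - eps; have c0 : 0 < c by rewrite /c; lra.
pose A p := dotv (a p) (a p).
pose M p := Num.max (c * A p) (- dotv (a p) (b p)).
have AL : lipschitz_near p0 A by apply: lipschitz_near_dotv.
have ML : lipschitz_near p0 M.
  apply: lipschitz_near_max; first exact: lipschitz_nearM (lipschitz_near_cst p0 c) AL.
  by apply: lipschitz_nearN; apply: lipschitz_near_dotv.
have A_ge0 p : 0 <= A p by apply: dotvv_ge0.
have AM p : c * A p <= M p by rewrite le_max lexx.
have kappa2E p : kappa2 eps (a p) (b p) = Num.min (A p / eps) 1 * (c * A p / M p).
  exact: kappa2_maxE.
apply: (lipschitzv_nearZ _ bL).
have [Ap0_le0|Ap0_gt0] := lerP (A p0) 0.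
- (* Near a zero of [a], [A < eps], so the gain is [c / eps * A^2 / M]. *)
  have [r [r0 near_Ap0]] := lipschitz_near_continuous AL eps0.
  apply: (lipschitz_near_eq (g := fun p => c / eps * (A p * A p / M p))).
    apply: lipschitz_nearM; first exact: lipschitz_near_cst.
    exact: lipschitz_near_sqr_div c0 A_ge0 AM AL ML.
  exists r; split => // p /near_Ap0 Ap_lt; rewrite kappa2E min_l.
    ring.
  have := A_ge0 p0; have := A_ge0 p.
  move: Ap_lt; rewrite ler_pdivrMr // mul1r ltr_norml; lra.
- apply: (lipschitz_near_ext _ kappa2E); apply: lipschitz_nearM.
    apply: lipschitz_near_min (lipschitz_near_cst p0 1).
    exact: lipschitz_nearM AL (lipschitz_near_cst p0 eps^-1).
  apply: lipschitz_nearM; first exact: lipschitz_nearM (lipschitz_near_cst p0 c) AL.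
  apply: lipschitz_nearV ML _; rewrite gt_eqF //.
  by apply: lt_le_trans (AM p0); rewrite mulr_gt0.
Qed.

Lemma lipschitz_near_sqr_enorm_sub (x : 'rV[R]_d) j :
  lipschitz_near p0 (fun p => enorm (x - p j) ^+ 2).
Proof.
have xL : lipschitzv_near p0 (fun p => x - p j).
  exact: lipschitzv_nearB (lipschitzv_near_cst p0 x) (lipschitzv_near_point p0 j).
by apply: lipschitz_near_ext (lipschitz_near_dotv xL xL) _ => p; rewrite sqr_enorm.
Qed.

Lemma mass_gt0 m (beta : R) (q : 'I_m -> 'rV[R]_d) (p : cfg) k (i : 'I_n) :
  0 < mass beta q p k.
Proof.
rewrite /mass mulr_gt0 ?invr_gt0 ?ltr0n ?(leq_ltn_trans _ (ltn_ord i)) //.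
rewrite (bigD1 i) //= ltr_pwDl ?expR_gt0 //.
by apply: sumr_ge0 => j _; apply: expR_ge0.
Qed.

Lemma lipschitz_near_mass m (beta : R) (q : 'I_m -> 'rV[R]_d) k :
  lipschitz_near p0 (fun p => mass beta q p k).
Proof.
apply: lipschitz_nearM; first exact: lipschitz_near_cst.
apply: lipschitz_near_sum => j _; apply: lipschitz_near_expR.
exact: lipschitz_nearM (lipschitz_near_cst p0 _) (lipschitz_near_sqr_enorm_sub _ _).
Qed.

Lemma lipschitzv_near_v_ms m (beta sigma1 : R) (q : 'I_m -> 'rV[R]_d) (i : 'I_n) :
  lipschitzv_near p0 (fun p => v_ms beta sigma1 q p i).
Proof.
pose w k p := (mass beta q p k)^-1 * expR (- beta * enorm (q k - p i) ^+ 2).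
have w_gt0 k p : 0 < w k p by rewrite mulr_gt0 ?expR_gt0 ?invr_gt0 ?(mass_gt0 _ _ _ _ i).
have wL k : lipschitz_near p0 (w k).
  apply: lipschitz_nearM.
    exact: lipschitz_nearV (lipschitz_near_mass _ _ _) (lt0r_neq0 (mass_gt0 _ _ _ _ i)).
  apply: lipschitz_near_expR.
  exact: lipschitz_nearM (lipschitz_near_cst p0 _) (lipschitz_near_sqr_enorm_sub _ _).
apply: lipschitzv_nearZ; last first.
  apply: lipschitzv_near_sum => k _; apply: lipschitzv_nearZ (wL k) _.
  exact: lipschitzv_nearB (lipschitzv_near_cst p0 _) (lipschitzv_near_point p0 i).
apply: lipschitz_nearM (lipschitz_near_cst p0 _) _.
(* For [m = 0] the normalising sum is empty and [0^-1 = 0]. *)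
case: m q @w w_gt0 wL => [|m] q w w_gt0 wL.
  by apply: lipschitz_near_ext (lipschitz_near_cst p0 0) _ => p; rewrite big_ord0 invr0.
apply: lipschitz_nearV (lipschitz_near_sum _ (fun k _ => wL k)) _.
rewrite lt0r_neq0 // (bigD1 ord0) //= ltr_pwDl ?w_gt0 //.
by apply: sumr_ge0 => k _; apply: ltW.
Qed.

(* The coefficient [ravoid - |p_i - p_j|] vanishes at the cutoff, so the sum may run
   over all [j != i] with the coefficient clipped at [0]. *)
Lemma lipschitzv_near_v_rep (sigma2 eps ravoid : R) (i : 'I_n) : 0 < eps ->
  lipschitzv_near p0 (fun p => v_rep sigma2 eps ravoid p i).
Proof.
move=> eps0.
apply: (lipschitzv_near_ext (g := fun p => sigma2 *: \sum_(j < n | j != i)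
  (Num.max (ravoid - enorm (p i - p j)) 0 / (enorm (p i - p j) + eps)) *: (p i - p j))).
  apply: lipschitzv_nearZ (lipschitz_near_cst p0 _) _.
  apply: lipschitzv_near_sum => j _.
  have dL : lipschitzv_near p0 (fun p => p i - p j).
    exact: lipschitzv_nearB (lipschitzv_near_point p0 i) (lipschitzv_near_point p0 j).
  apply: (lipschitzv_nearZ _ dL); apply: lipschitz_nearM.
    apply: lipschitz_near_max (lipschitz_near_cst p0 0).
    exact: lipschitz_nearB (lipschitz_near_cst p0 _) (lipschitz_near_enorm dL).
  apply: lipschitz_nearV; last by rewrite /= lt0r_neq0 // ltr_pwDr // enorm_ge0.
  exact: lipschitz_nearD (lipschitz_near_enorm dL) (lipschitz_near_cst p0 _).
move=> p; rewrite /v_rep big_mkcondr; congr (_ *: _); apply: eq_bigr => j _.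
case: ifP => [near_ij|/negbT]; first by rewrite max_l // subr_ge0.
by rewrite -ltNge => far_ij; rewrite max_r ?mul0r ?scale0r // subr_le0 ltW.
Qed.

End ControlTerms.

Theorem lemma7 (R : realType) (d n m : nat) (q : 'I_m -> 'rV[R]_d)
  (beta sigma1 sigma2 eps ravoid vmax : R) :
  (2 <= n)%N -> 0 < beta -> 0 < sigma1 -> 0 < sigma2 ->
  0 < eps -> eps < 1 -> 0 < ravoid -> 0 < vmax ->
  forall i : 'I_n,
    locally_lipschitz
      (fun p : config R d n => control beta sigma1 sigma2 eps ravoid vmax q p i).
Proof.
move=> _ _ _ _ eps0 eps1 _ vmax0 i p0.
have msL := lipschitzv_near_v_ms p0 beta sigma1 q i.
have repL := lipschitzv_near_v_rep p0 sigma2 ravoid i eps0.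
have cvL := lipschitzv_near_kappa2Z eps0 eps1 msL repL.
have [r [L [r0 [_ controlL]]]] :=
  lipschitzv_near_enorm (lipschitzv_near_sat vmax0 (lipschitzv_nearD msL cvL)).
by exists r, L.
Qed.
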